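(* Let $K$ be a field, $N\ge 2$, $N_1,\dots,N_N\ge 1$, and for $1\le i\le N$, $1\le j\le N_i$ let $L_{i,j}=a_ix+b_iy+c_{i,j}\in K[x,y]$ be non-constant polynomials such that the lines $L_{i,j}=0$ in the affine plane are pairwise distinct, and lines with different first index are not parallel. Then for every $\lambda\in K^*$ the polynomial $$f(x,y)=\lambda\prod_{i=1}^N\prod_{j=1}^{N_i}L_{i,j}-1$$ is irreducible in $K[x,y]$; in particular the affine curve $f(x,y)=0$ is irreducible.
   Context: Note that all lines with the same first index $i$ are parallel (they share the coefficients $a_i,b_i$); ''not parallel for distinct $i$'' means $a_ib_k-a_kb_i\neq 0$ for $i\neq k$. *)

(* K[x,y] is modelled as {poly {poly K}} = (K[y])[x]:
   the outer indeterminate 'X is x, and the inner one ('X)%:P is y. *)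
From HB Require Import structures.
From mathcomp Require Import all_boot all_order all_algebra.
Set Implicit Arguments. Unset Strict Implicit. Unset Printing Implicit Defensive.
Import Order.TTheory GRing.Theory Num.Theory.
Local Open Scope ring_scope.

Definition varx (K : fieldType) : {poly {poly K}} := 'X.
Definition vary (K : fieldType) : {poly {poly K}} := ('X : {poly K})%:P.
Definition cst2 (K : fieldType) (c : K) : {poly {poly K}} := c%:P%:P.

Definition irreducible2 (K : fieldType) (f : {poly {poly K}}) : Prop :=
  [/\ f != 0, f \isn't a GRing.unit &
      forall g h : {poly {poly K}}, f = g * h ->
        g \is a GRing.unit \/ h \is a GRing.unit].

Definition linepoly (K : fieldType) (a b c : K) : {poly {poly K}} :=
  cst2 a * varx K + cst2 b * vary K + cst2 c.

From HB Require Import structures.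
From mathcomp Require Import all_boot all_order all_algebra.
From mathcomp Require Import ring zify.
Import GRing.Theory.
Local Open Scope ring_scope.
Set Implicit Arguments. Unset Strict Implicit.

(* Let P be the product of all the lines L_{i,j} and
   f = lam P - 1.  For each line L = a x + b y + c, "restriction to L"
   (substituting a parametrisation of L) is a ring morphism
   K[x,y] -> K[t] whose kernel is the principal ideal (L).  It kills P, so
   it maps f to -1, and therefore maps any factor g of f to a unit of K[t],
   i.e. to a nonzero constant C_L.  Two lines of different directions meet;
   evaluating g at their meeting point gives C_L = C_L', and since there are
   at least two directions all the C_L are one constant C.  So g - C
   vanishes on every line; distinct lines are coprime, hence P divides
   g - C and g = C + P r.  Writing likewise h = D + P s, a comparison of
   degrees in x (P has x-degree at least 1) forces r = 0 or s = 0, so g or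
   h is a nonzero constant, i.e. a unit. *)

Definition ev (K : fieldType) (x0 y0 : K) (p : {poly {poly K}}) : K :=
  p.[x0%:P].[y0].

Section Evaluation.
Variables (K : fieldType) (x0 y0 : K).

Lemma evM (p q : {poly {poly K}}) : ev x0 y0 (p * q) = ev x0 y0 p * ev x0 y0 q.
Proof. by rewrite /ev !hornerM. Qed.

Lemma evB (p q : {poly {poly K}}) : ev x0 y0 (p - q) = ev x0 y0 p - ev x0 y0 q.
Proof. by rewrite /ev !hornerE. Qed.

Lemma ev_cst2 (k : K) : ev x0 y0 (cst2 k) = k.
Proof. by rewrite /ev /cst2 !hornerC. Qed.

Lemma ev_line (a b c : K) : ev x0 y0 (linepoly a b c) = a * x0 + b * y0 + c.
Proof. by rewrite /ev /linepoly /cst2 /varx /vary !hornerE. Qed.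

End Evaluation.

(* A line polynomial is not the zero polynomial: it takes the value 1
   somewhere. *)
Lemma line_neq0 (K : fieldType) (a b c : K) :
  (a != 0) || (b != 0) -> linepoly a b c != 0.
Proof.
case/orP => [ha | hb]; apply/eqP => L0.
  have := ev_line ((1 - c) / a) 0 a b c.
  rewrite L0 /ev !horner0 mulr0 addr0 mulrCA mulfV // mulr1 subrK.
  by move/esym/eqP; rewrite oner_eq0.
have := ev_line 0 ((1 - c) / b) a b c.
rewrite L0 /ev !horner0 mulr0 add0r mulrCA mulfV // mulr1 subrK.
by move/esym/eqP; rewrite oner_eq0.
Qed.

(* Two non-parallel lines meet (Cramer's rule). *)
Lemma lines_meet (K : fieldType) (a b c a' b' c' : K) : a * b' - a' * b != 0 ->
  exists x0 y0, a * x0 + b * y0 + c = 0 /\ a' * x0 + b' * y0 + c' = 0.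
Proof.
move=> hD; exists ((b * c' - b' * c) / (a * b' - a' * b)).
by exists ((a' * c - a * c') / (a * b' - a' * b)); split; field.
Qed.

Section LineRestriction.
Variables (K : fieldType) (a b c : K).

(* Restriction of p to the line a x + b y + c = 0: substitute
   x := -(b y + c)/a when a != 0, and y := -c/b otherwise (the variable of
   the result being y, resp. x). *)
Definition restr (p : {poly {poly K}}) : {poly K} :=
  if a != 0 then p.[- ((a^-1 * b)%:P * 'X + (a^-1 * c)%:P)]
  else map_poly (horner_eval (- (b^-1 * c))) p.

Lemma restrM p q : restr (p * q) = restr p * restr q.
Proof. by rewrite /restr; case: ifP => _; [rewrite hornerM | rewrite rmorphM]. Qed.

Lemma restrB p q : restr (p - q) = restr p - restr q.
Proof. by rewrite /restr; case: ifP => _; [rewrite hornerD hornerN | rewrite rmorphB]. Qed.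

Lemma restr_cst2 k : restr (cst2 k) = k%:P.
Proof.
by rewrite /restr /cst2; case: ifP => _; rewrite ?hornerC // map_polyC /= /horner_eval hornerC.
Qed.

Lemma restr1 : restr 1 = 1.
Proof. by have := restr_cst2 1; rewrite /cst2 !polyC1. Qed.

Lemma line_factor : a != 0 ->
  linepoly a b c = cst2 a * ('X - (- ((a^-1 * b)%:P * 'X + (a^-1 * c)%:P))%:P).
Proof.
move=> ha; rewrite /linepoly /cst2 /varx /vary.
have aV : (a%:P%:P : {poly {poly K}}) * a^-1%:P%:P = 1.
  by rewrite -!rmorphM mulfV // !rmorph1.
rewrite !(rmorphN, rmorphD, rmorphM) /=.
transitivity (a%:P%:P * 'X + (a%:P%:P * a^-1%:P%:P) * (b%:P%:P * 'X%:P)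
  + (a%:P%:P * a^-1%:P%:P) * c%:P%:P : {poly {poly K}}); first by rewrite aV !mul1r.
ring.
Qed.

Lemma vline_factor : a = 0 -> b != 0 ->
  linepoly a b c = cst2 b * ('X - (- (b^-1 * c))%:P)%:P.
Proof.
move=> -> hb; rewrite /linepoly /cst2 /varx /vary.
have bV : (b%:P%:P : {poly {poly K}}) * b^-1%:P%:P = 1.
  by rewrite -!rmorphM mulfV // !rmorph1.
rewrite !(rmorphN, rmorphD, rmorphM, rmorphB) /= !rmorph0 mul0r add0r.
transitivity (b%:P%:P * 'X%:P + (b%:P%:P * b^-1%:P%:P) * c%:P%:P : {poly {poly K}}).
  by rewrite bV !mul1r.
ring.
Qed.

Hypothesis hab : (a != 0) || (b != 0).

Lemma restr_line : restr (linepoly a b c) = 0.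
Proof.
rewrite /restr; case: ifP => ha.
  by rewrite line_factor // hornerM hornerXsubC subrr mulr0.
have hb : b != 0 by move: hab; rewrite ha.
rewrite vline_factor //; last exact/eqP/negbFE.
by rewrite rmorphM /= !map_polyC /= /horner_eval hornerXsubC subrr mulr0.
Qed.

(* The kernel of restriction is the ideal generated by the line:
   the factor theorem in x, resp. coefficientwise in y. *)
Lemma restr_ker p : restr p = 0 -> exists q, p = q * linepoly a b c.
Proof.
rewrite /restr; case: ifP => ha.
  move=> /eqP rootp; have /factor_theorem [q ->] := rootp.
  exists (q * cst2 a^-1).
  by rewrite line_factor // mulrA -(mulrA q) /cst2 -!rmorphM mulVf // !rmorph1 mulr1.
have hb : b != 0 by move: hab; rewrite ha.
move=> p0.
pose d := ('X - (- (b^-1 * c))%:P : {poly K}).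
exists (map_poly (fun r => r %/ d) p * cst2 b^-1).
rewrite vline_factor //; last exact/eqP/negbFE.
rewrite mulrA -(mulrA _ (cst2 b^-1)) /cst2 -!rmorphM mulVf //.
rewrite !rmorph1 mulr1; apply/polyP => i.
rewrite coefMC coef_map_id0 ?div0p // divpK // dvdp_XsubCl /root.
by move/polyP: p0 => /(_ i); rewrite coef_map /= /horner_eval coef0 => ->.
Qed.

Lemma restr_eq0_ev p x0 y0 :
  restr p = 0 -> a * x0 + b * y0 + c = 0 -> ev x0 y0 p = 0.
Proof.
by case/restr_ker => q ->; rewrite evM ev_line => ->; rewrite mulr0.
Qed.

Lemma restr_const_ev p C x0 y0 :
  restr p = C%:P -> a * x0 + b * y0 + c = 0 -> ev x0 y0 p = C.
Proof.
move=> pC onL; apply/eqP; rewrite -subr_eq0 -(ev_cst2 x0 y0 C) -evB.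
by apply/eqP/restr_eq0_ev => //; rewrite restrB restr_cst2 pC subrr.
Qed.

(* Separation: a parallel line with a different constant term does not
   vanish on the line ... *)
Lemma restr_parallel c' : c != c' -> restr (linepoly a b c') != 0.
Proof.
move=> cc'.
have -> : linepoly a b c' = linepoly a b c - cst2 (c - c').
  by rewrite /linepoly /cst2 !rmorphB /=; ring.
by rewrite restrB restr_line restr_cst2 sub0r oppr_eq0 polyC_eq0 subr_eq0.
Qed.

(* ... and neither does a non-parallel line: moving from the meeting point
   along the line changes the value of the other line polynomial. *)
Lemma restr_transversal a' b' c' :
  a * b' - a' * b != 0 -> restr (linepoly a' b' c') != 0.
Proof.
move=> hD; apply/eqP => r0.
have [x0 [y0 [onL onL']]] := lines_meet c c' hD.
have onL_moved : a * (x0 - b) + b * (y0 + a) + c = 0 by rewrite -onL; ring.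
have := restr_eq0_ev r0 onL_moved; rewrite ev_line.
have -> : a' * (x0 - b) + b' * (y0 + a) + c' = a * b' - a' * b + (a' * x0 + b' * y0 + c').
  by ring.
by rewrite onL' addr0 => D0; rewrite D0 eqxx in hD.
Qed.

End LineRestriction.

Lemma prod_lines_dvd (K : fieldType) (T : eqType) (s : seq T) (A B C : T -> K)
    (p : {poly {poly K}}) :
  uniq s -> (forall t, (A t != 0) || (B t != 0)) ->
  (forall t t', t \in s -> t' \in s -> t != t' ->
     restr (A t) (B t) (C t) (linepoly (A t') (B t') (C t')) != 0) ->
  (forall t, t \in s -> restr (A t) (B t) (C t) p = 0) ->
  exists q, p = q * \prod_(t <- s) linepoly (A t) (B t) (C t).
Proof.
elim: s p => [|t0 s IH] p /=; first by move=> *; exists p; rewrite big_nil mulr1.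
case/andP => t0s us hnc sep vanish.
have in_cons t : t \in s -> t \in t0 :: s by move=> ts; rewrite inE ts orbT.
have [q pq] := restr_ker (hnc t0) (vanish t0 (mem_head _ _)).
have [q' qq'] : exists q', q = q' * \prod_(t <- s) linepoly (A t) (B t) (C t).
  apply: IH => // [t t' ht ht' tt'|t ht]; first by apply: sep; rewrite ?in_cons.
  have tt0 : t != t0 by apply: contraNneq t0s => <-.
  have := vanish t (in_cons _ ht); rewrite pq restrM => /eqP.
  rewrite mulf_eq0 (negPf (sep _ _ (in_cons _ ht) (mem_head _ _) tt0)) orbF.
  by move/eqP.
by exists q'; rewrite pq qq' big_cons -mulrA (mulrC (linepoly _ _ _)).
Qed.

Lemma small_product_eq0 (R : idomainType) (P E : {poly R}) :
  (2 <= size P)%N -> (size (P * E)%R <= 1)%N -> E = 0.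
Proof.
move=> sP sPE; have [//|E0] := eqVneq E 0.
have P0 : P != 0 by rewrite -size_poly_gt0; lia.
have : (0 < size E)%N by rewrite size_poly_gt0.
by move: sPE; rewrite size_mul //; lia.
Qed.

Lemma constant_plus_multiples (R : idomainType) (P r s : {poly R}) (lam C D : R) :
  (2 <= size P)%N -> lam%:P * P - 1 = (C%:P + P * r) * (D%:P + P * s) ->
  r = 0 \/ s = 0.
Proof.
move=> sP e.
have [->|r0] := eqVneq r 0; first by left.
have [->|s0] := eqVneq s 0; first by right.
exfalso.
pose E := lam%:P - C%:P * s - D%:P * r - P * r * s.
have PE : P * E = (C * D + 1)%:P.
  apply/eqP; rewrite polyCD polyCM polyC1 -subr_eq0; apply/eqP.
  transitivity (lam%:P * P - 1 - (C%:P + P * r) * (D%:P + P * s)); first by rewrite /E; ring.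
  by rewrite e subrr.
have E0 : E = 0 by apply: small_product_eq0 sP _; rewrite PE size_polyC leq_b1.
have Prs : P * r * s = lam%:P - C%:P * s - D%:P * r.
  by apply/eqP; rewrite eq_sym -subr_eq0; apply/eqP; rewrite -E0.
(* Sizes: the left side has size >= size r + size s, the right side at most
   max(1, size r, size s). *)
have sCs : (size (C%:P * s)%R <= size s)%N by rewrite mul_polyC size_scale_leq.
have sDr : (size (D%:P * r)%R <= size r)%N by rewrite mul_polyC size_scale_leq.
have s1 := size_polyD (lam%:P - C%:P * s) (- (D%:P * r)).
have s2 := size_polyD (lam%:P) (- (C%:P * s)).
have s3 := size_polyC_leq1 lam.
rewrite !size_polyN in s1 s2.
have P0 : P != 0 by rewrite -size_poly_gt0; lia.
have : (0 < size r)%N by rewrite size_poly_gt0.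
have : (0 < size s)%N by rewrite size_poly_gt0.
move: s1; rewrite -Prs size_mul ?mulf_neq0 // size_mul //.
move: s2 s3 sCs sDr sP.
move: (size (lam%:P - C%:P * s)) (size lam%:P) (size (C%:P * s)) (size (D%:P * r)).
move: (size P) (size r) (size s) => *; lia.
Qed.

Lemma size_const_mul_sub1 (R : idomainType) (P : {poly R}) (lam : R) :
  lam != 0 -> (2 <= size P)%N -> size (lam%:P * P - 1) = size P.
Proof.
move=> lam0 sP; have sP' : size (lam%:P * P) = size P.
  by rewrite mul_polyC size_scale.
by rewrite size_polyDl sP' // size_polyN size_poly1.
Qed.

Lemma cst2_unit (K : fieldType) (k : K) : k != 0 -> cst2 k \is a GRing.unit.
Proof. by move=> k0; rewrite /cst2 !(rmorph_unit polyC) // unitfE. Qed.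

Lemma divisor_Nunit_const (K : fieldType) (u v : {poly K}) :
  u * v = -1 -> exists2 C, C != 0 & u = C%:P.
Proof.
move=> uv; have : u \is a GRing.unit.
  by apply/unitrPr; exists (- v); rewrite mulrN uv opprK.
rewrite poly_unitE => /andP[/eqP su u0]; exists u`_0; first by rewrite -unitfE.
by apply: size1_polyC; rewrite su.
Qed.

Section Configuration.
Variables (K : fieldType) (N : nat) (Ns : 'I_N -> nat) (a b : 'I_N -> K)
  (c : forall i : 'I_N, 'I_(Ns i) -> K).
Arguments c : clear implicits.

Local Notation lineidx := {i : 'I_N & 'I_(Ns i)}.

Definition line_of (u : lineidx) : {poly {poly K}} :=
  linepoly (a (tag u)) (b (tag u)) (c (tag u) (tagged u)).
Definition restr_to (u : lineidx) : {poly {poly K}} -> {poly K} :=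
  restr (a (tag u)) (b (tag u)) (c (tag u) (tagged u)).
Definition lineprod : {poly {poly K}} := \prod_(u : lineidx) line_of u.

Lemma lineprod_sigma :
  \prod_(i < N) \prod_(j < Ns i) linepoly (a i) (b i) (c i j) = lineprod.
Proof. exact: (sig_big_dep xpredT (fun _ => xpredT)). Qed.

Hypothesis hN : (2 <= N)%N.
Hypothesis hNs : forall i, (1 <= Ns i)%N.
Hypothesis hnc : forall i, (a i != 0) || (b i != 0).
Hypothesis hdist : forall (i : 'I_N) (j j' : 'I_(Ns i)), j != j' -> c i j != c i j'.
Hypothesis hpar : forall i k : 'I_N, i != k -> a i * b k - a k * b i != 0.

Let i1 : 'I_N := Ordinal (leq_trans (isT : (0 < 2)%N) hN).
Let i2 : 'I_N := Ordinal hN.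
Let i12 : i1 != i2. Proof. by []. Qed.
Let line_in (i : 'I_N) : lineidx := Tagged (fun i => 'I_(Ns i)) (Ordinal (hNs i)).

Lemma restr_lineprod u : restr_to u lineprod = 0.
Proof.
by rewrite /lineprod (bigD1 u) //= /restr_to restrM (restr_line _ (hnc _)) mul0r.
Qed.

Lemma restr_sep u v : u != v -> restr_to u (line_of v) != 0.
Proof.
case: u v => [i j] [k l] uv; rewrite /restr_to /line_of /=.
have [ik|ik] := eqVneq i k; last exact: restr_transversal _ (hnc i) _ _ _ (hpar ik).
subst k; apply/(restr_parallel (hnc i))/hdist.
by apply: contra uv => /eqP ->.
Qed.

(* Some direction is not vertical, so P has x-degree at least 1. *)
Lemma size_lineprod : (2 <= size lineprod)%N.
Proof.
have [i ai] : exists i, a i != 0.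
  have [a1|] := eqVneq (a i1) 0; last by exists i1.
  have [a2|] := eqVneq (a i2) 0; last by exists i2.
  by move: (hpar i12); rewrite a1 a2 !mul0r subrr eqxx.
have Lnz u : line_of u != 0 by apply: line_neq0.
have size_Li : size (line_of (line_in i)) = 2%N.
  rewrite /line_of /linepoly /cst2 /varx /vary /= -addrA -rmorphM -rmorphD /=.
  rewrite size_MXaddC !polyC_eq0; case: eqP => [ai0|_] /=.
    by move: ai; rewrite ai0 eqxx.
  by rewrite size_polyC polyC_eq0 ai.
have rest0 : \prod_(v | v != line_in i) line_of v != 0 by apply/prodf_neq0 => v _.
rewrite /lineprod (bigD1 (line_in i)) //= size_mul ?Lnz // size_Li.
by move: rest0; rewrite -size_poly_gt0; case: size.
Qed.

Lemma factor_const_on_lines lam g h :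
  g * h = cst2 lam * lineprod - 1 ->
  exists2 C, C != 0 & forall u, restr_to u g = C%:P.
Proof.
move=> gh.
have unitC u : exists2 C, C != 0 & restr_to u g = C%:P.
  apply: (@divisor_Nunit_const _ _ (restr_to u h)).
  rewrite /restr_to -restrM gh restrB restrM restr1 -/(restr_to u).
  by rewrite restr_lineprod mulr0 sub0r.
have cross u v C D : tag u != tag v -> restr_to u g = C%:P -> restr_to v g = D%:P -> C = D.
  move=> uv gC gD.
  have [x0 [y0 [onu onv]]] := lines_meet (c _ (tagged u)) (c _ (tagged v)) (hpar uv).
  by rewrite -(restr_const_ev (hnc _) gC onu) -(restr_const_ev (hnc _) gD onv).
have [C C0 gC] := unitC (line_in i1); exists C => // u.
have [Cu _ gCu] := unitC u; rewrite gCu; congr (_%:P).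
have [ui1|ui1] := eqVneq (tag u) i1; last exact: cross gCu gC.
have [C2 _ gC2] := unitC (line_in i2).
by rewrite (cross _ _ _ _ _ gCu gC2) ?ui1 // (cross _ _ _ _ _ gC2 gC).
Qed.

Lemma factor_shape lam g h :
  g * h = cst2 lam * lineprod - 1 ->
  exists2 C, C != 0 & exists r, g = cst2 C + lineprod * r.
Proof.
move=> /factor_const_on_lines [C C0 gC]; exists C => //.
have [q gCq] : exists q, g - cst2 C = q * lineprod.
  apply: prod_lines_dvd (index_enum_uniq _) (fun u => hnc (tag u)) _ _.
    by move=> u v _ _; apply: restr_sep.
  by move=> u _; rewrite restrB restr_cst2 -/(restr_to u) gC subrr.
by exists q; rewrite mulrC -gCq addrC subrK.
Qed.

End Configuration.

Unset Implicit Arguments.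

Theorem lemma2p1 (K : fieldType) (N : nat) (Ns : 'I_N -> nat)
  (a b : 'I_N -> K) (c : forall i : 'I_N, 'I_(Ns i) -> K)
  (hN : (2 <= N)%N)
  (hNs : forall i, (1 <= Ns i)%N)
  (hnc : forall i, (a i != 0) || (b i != 0))
  (hdist : forall (i : 'I_N) (j j' : 'I_(Ns i)), j != j' -> c i j != c i j')
  (hpar : forall i k : 'I_N, i != k -> a i * b k - a k * b i != 0)
  (lam : K) (hlam : lam != 0) :
  irreducible2
    (cst2 lam * \prod_(i < N) \prod_(j < Ns i) linepoly (a i) (b i) (c i j) - 1).
Proof.
rewrite lineprod_sigma; set P := lineprod a b c.
have sP : (2 <= size P)%N := size_lineprod c hN hNs hnc hpar.
have sf : size (cst2 lam * P - 1) = size P.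
  by apply: size_const_mul_sub1; rewrite ?polyC_eq0.
split.
- by rewrite -size_poly_gt0 sf; apply: leq_trans sP.
- by rewrite poly_unitE sf; case: eqP sP => // ->.
move=> g h gh.
have hg : h * g = cst2 lam * P - 1 by rewrite gh mulrC.
have [C C0 [r gE]] := factor_shape hN hNs hnc hdist hpar (esym gh).
have [D D0 [s hE]] := factor_shape hN hNs hnc hdist hpar hg.
have [r0|s0] := constant_plus_multiples sP (etrans gh (congr2 *%R gE hE)).
  by left; rewrite gE r0 mulr0 addr0 cst2_unit.
by right; rewrite hE s0 mulr0 addr0 cst2_unit.
Qed.
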